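(* Let $G$ be a group and $O'\subset O$ two equipments of $G$ with $O$ finite, such that the elements of $O'$ generate $G$. Then $a_{(G,O)}\le a_{(G,O')}$; in particular, if $a_{(G,O')}=1$ then $a_{(G,O)}=1$.
   Context: An equipment of $G$ is a subset which is a union of finitely many conjugacy classes of $G$ and does not contain $1$. For an equipment $O$ generating $G$, let $\widehat G_O$ be the group with generators $y_g$ ($g\in O$) and relations $y_h^{-1}y_gy_h=y_{h^{-1}gh}$ for all $g,h\in O$, and $\beta:\widehat G_O\to G$, $y_g\mapsto g$, with kernel $H$ (central). The ambiguity index is $a_{(G,O)}=|H\cap[\widehat G_O,\widehat G_O]|$. *)

(* The groups \widehat G_O are
   built as group presentations: words over O modulo the congruence generated
   by free cancellation and the relations y_h^{-1} y_g y_h = y_{h^{-1} g h}. *)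
From Stdlib Require Import List Bool.
Import ListNotations.

Record Group := {
  carrier :> Type;
  gmul : carrier -> carrier -> carrier;
  ginv : carrier -> carrier;
  gone : carrier;
  gmulA : forall x y z, gmul x (gmul y z) = gmul (gmul x y) z;
  gmul1l : forall x, gmul gone x = x;
  gmulVl : forall x, gmul (ginv x) x = gone
}.

Section Defs.
Variable G : Group.

Definition gconj (g h : G) : G := gmul G (ginv G h) (gmul G g h).

Definition equipment (O : G -> Prop) : Prop :=
  (forall g h, O g -> O (gconj g h)) /\
  ~ O (gone G) /\
  (exists reps : list G, forall x, O x <-> exists c h, In c reps /\ x = gconj c h).

Definition finite_set (O : G -> Prop) : Prop :=
  exists l : list G, forall x, O x <-> In x l.

(* a letter (g, b) stands for y_g if b = false and y_g^{-1} if b = true *)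
Definition letter := (G * bool)%type.
Definition word := list letter.

Definition eval_letter (l : letter) : G :=
  if snd l then ginv G (fst l) else fst l.

(* the image under beta : y_g |-> g *)
Definition eval (w : word) : G :=
  fold_right (fun l acc => gmul G (eval_letter l) acc) (gone G) w.

Definition word_on (O : G -> Prop) (w : word) : Prop :=
  Forall (fun l => O (fst l)) w.

Definition generates (O : G -> Prop) : Prop :=
  forall x : G, exists w, word_on O w /\ eval w = x.

Inductive hequiv (O : G -> Prop) : word -> word -> Prop :=
| hequiv_refl : forall w, hequiv O w w
| hequiv_sym : forall u v, hequiv O u v -> hequiv O v u
| hequiv_trans : forall u v w, hequiv O u v -> hequiv O v w -> hequiv O u w
| hequiv_cat : forall u u' v v', hequiv O u u' -> hequiv O v v' ->
    hequiv O (u ++ v) (u' ++ v')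
| hequiv_cancel : forall g b, O g -> hequiv O [(g, b); (g, negb b)] []
| hequiv_rel : forall g h, O g -> O h ->
    hequiv O [(h, true); (g, false); (h, false)] [(gconj g h, false)].

Definition inv_word (w : word) : word :=
  rev (map (fun l => (fst l, negb (snd l))) w).

Definition comm_word (u v : word) : word :=
  inv_word u ++ inv_word v ++ u ++ v.

Definition in_comm (O : G -> Prop) (w : word) : Prop :=
  exists ps : list (word * word),
    Forall (fun p => word_on O (fst p) /\ word_on O (snd p)) ps /\
    hequiv O w (concat (map (fun p => comm_word (fst p) (snd p)) ps)).

(* representatives of elements of H \cap [\widehat G_O, \widehat G_O], H = ker beta *)
Definition amb_set (O : G -> Prop) (w : word) : Prop :=
  word_on O w /\ eval w = gone G /\ in_comm O w.

(* a_{(G,O)} <= a_{(G,O')} as cardinals: an injection between the quotient sets *)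
Definition amb_le (O O' : G -> Prop) : Prop :=
  exists f : word -> word,
    (forall w, amb_set O w -> amb_set O' (f w)) /\
    (forall w1 w2, amb_set O w1 -> amb_set O w2 ->
        hequiv O w1 w2 -> hequiv O' (f w1) (f w2)) /\
    (forall w1 w2, amb_set O w1 -> amb_set O w2 ->
        hequiv O' (f w1) (f w2) -> hequiv O w1 w2).

Definition amb_one (O : G -> Prop) : Prop :=
  forall w, amb_set O w -> hequiv O w [].

End Defs.

Arguments gconj {G}.
Arguments equipment {G}.
Arguments finite_set {G}.
Arguments generates {G}.
Arguments amb_le {G}.
Arguments amb_one {G}.

(* In \widehat G_O the conjugate of a generator y_a by a word w is y_{a^{beta(w)}}.
   Hence conjugation by w, and therefore every commutator [u, v], depends only on
   beta(u) and beta(v).  As O' generates G, every product of commutators of words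
   over O equals in \widehat G_O a product of commutators of words over O', so every
   element of H ∩ [\widehat G_O, \widehat G_O] comes from H ∩ [\widehat G_{O'},
   \widehat G_{O'}] under the natural map \widehat G_{O'} -> \widehat G_O.  Choosing
   such a preimage for each class gives the injection. *)
From Stdlib Require Import List Bool Setoid Morphisms RelationClasses.
From Stdlib Require Import ClassicalEpsilon FunctionalExtensionality PropExtensionality.
Import ListNotations.

Section GroupFacts.
Variable G : Group.

Lemma mulg_cancel_l (a x y : G) : gmul G a x = gmul G a y -> x = y.
Proof.
  intro E.
  rewrite <- (gmul1l G x), <- (gmul1l G y), <- (gmulVl G a), <- !gmulA, E.
  reflexivity.
Qed.

Lemma mulg1 (x : G) : gmul G x (gone G) = x.
Proof.
  apply (mulg_cancel_l (ginv G x)). rewrite gmulA, gmulVl, gmul1l. reflexivity.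
Qed.

Lemma mulgV (x : G) : gmul G x (ginv G x) = gone G.
Proof.
  apply (mulg_cancel_l (ginv G x)). rewrite gmulA, gmulVl, gmul1l, mulg1. reflexivity.
Qed.

Lemma invMg (x y : G) : ginv G (gmul G x y) = gmul G (ginv G y) (ginv G x).
Proof.
  apply (mulg_cancel_l (gmul G x y)). rewrite mulgV.
  rewrite <- gmulA, (gmulA G y), mulgV, gmul1l, mulgV. reflexivity.
Qed.

Lemma invg1 : ginv G (gone G) = gone G.
Proof. rewrite <- (mulg1 (ginv G (gone G))). apply gmulVl. Qed.

Lemma gconj1 (a : G) : gconj a (gone G) = a.
Proof. unfold gconj. rewrite invg1, mulg1, gmul1l. reflexivity. Qed.

Lemma gconjM (a x y : G) : gconj (gconj a x) y = gconj a (gmul G x y).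
Proof. unfold gconj. rewrite invMg, !gmulA. reflexivity. Qed.

Lemma gconjVK (a h : G) : gconj (gconj a (ginv G h)) h = a.
Proof. rewrite gconjM, gmulVl, gconj1. reflexivity. Qed.

Lemma eval_cat (u v : word G) : eval G (u ++ v) = gmul G (eval G u) (eval G v).
Proof.
  induction u as [|l u IH]; simpl.
  - rewrite gmul1l. reflexivity.
  - rewrite IH, gmulA. reflexivity.
Qed.

Lemma inv_word_cat (u v : word G) : inv_word G (u ++ v) = inv_word G v ++ inv_word G u.
Proof. unfold inv_word. rewrite map_app, rev_app_distr. reflexivity. Qed.

Lemma inv_word_cons (g : G) (b : bool) (u : word G) :
  inv_word G ((g, b) :: u) = inv_word G u ++ [(g, negb b)].
Proof. reflexivity. Qed.

Lemma inv_wordK (u : word G) : inv_word G (inv_word G u) = u.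
Proof.
  unfold inv_word. rewrite map_rev, rev_involutive, map_map.
  induction u as [|[g b] u IH]; simpl; [reflexivity|].
  rewrite negb_involutive. f_equal. exact IH.
Qed.

Lemma word_on_cat (O : G -> Prop) u v :
  word_on G O u -> word_on G O v -> word_on G O (u ++ v).
Proof. intros. apply Forall_app; auto. Qed.

Lemma word_on_inv (O : G -> Prop) u : word_on G O u -> word_on G O (inv_word G u).
Proof.
  intro Hu. apply Forall_rev, Forall_map.
  eapply Forall_impl; [|exact Hu]. auto.
Qed.

Lemma word_on_sub (O O' : G -> Prop) u :
  (forall x, O' x -> O x) -> word_on G O' u -> word_on G O u.
Proof. intros sO'O Hu. eapply Forall_impl; [|exact Hu]. auto. Qed.

Lemma hequiv_sub (O O' : G -> Prop) u v :
  (forall x, O' x -> O x) -> hequiv G O' u v -> hequiv G O u v.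
Proof.
  intros sO'O E. induction E.
  - apply hequiv_refl.
  - apply hequiv_sym; auto.
  - eapply hequiv_trans; eauto.
  - apply hequiv_cat; auto.
  - apply hequiv_cancel; auto.
  - apply hequiv_rel; auto.
Qed.

Lemma hequiv_eval (O : G -> Prop) u v : hequiv G O u v -> eval G u = eval G v.
Proof.
  intro E. induction E; try congruence.
  - rewrite !eval_cat. congruence.
  - destruct b; simpl; rewrite mulg1; [apply gmulVl | apply mulgV].
  - simpl. rewrite !mulg1. reflexivity.
Qed.

End GroupFacts.

Global Instance hequiv_Equivalence (G : Group) (O : G -> Prop) : Equivalence (hequiv G O).
Proof.
  split.
  - intro. apply hequiv_refl.
  - intros u v. apply hequiv_sym.
  - intros u v w. apply hequiv_trans.
Qed.

Global Instance app_hequiv_Proper (G : Group) (O : G -> Prop) :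
  Proper (hequiv G O ==> hequiv G O ==> hequiv G O) (@app (letter G)).
Proof. intros u u' Eu v v' Ev. apply hequiv_cat; auto. Qed.

Global Instance cons_hequiv_Proper (G : Group) (O : G -> Prop) :
  Proper (eq ==> hequiv G O ==> hequiv G O) (@cons (letter G)).
Proof.
  intros l l' <- v v' Ev. change (hequiv G O ([l] ++ v) ([l] ++ v')).
  rewrite Ev. reflexivity.
Qed.

Section ConjugationInvariantGenerators.
Variable G : Group.
Variable O : G -> Prop.
Hypothesis O_gconj : forall g h, O g -> O (gconj g h).

Lemma hequiv_cancel_cons (g : G) b r : O g -> hequiv G O ((g, b) :: (g, negb b) :: r) r.
Proof.
  intro Og. change (hequiv G O ([(g, b); (g, negb b)] ++ r) ([] ++ r)).
  rewrite (hequiv_cancel G O g b Og). reflexivity.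
Qed.

Lemma hequiv_cancel_cons_neg (g : G) b r : O g -> hequiv G O ((g, negb b) :: (g, b) :: r) r.
Proof. intro Og. rewrite <- (negb_involutive b) at 2. apply hequiv_cancel_cons, Og. Qed.

Lemma hequiv_cat_inv_word w r : word_on G O w -> hequiv G O (w ++ inv_word G w ++ r) r.
Proof.
  intro Hw. revert r. induction Hw as [|[g b] w Og Hw IH]; intro r; [reflexivity|].
  rewrite inv_word_cons, <- !app_assoc. simpl.
  rewrite IH. apply hequiv_cancel_cons, Og.
Qed.

Lemma hequiv_inv_word_cat w r : word_on G O w -> hequiv G O (inv_word G w ++ w ++ r) r.
Proof.
  intro Hw. revert r. induction Hw as [|[g b] w Og Hw IH]; intro r; [reflexivity|].
  rewrite inv_word_cons, <- !app_assoc. simpl.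
  rewrite hequiv_cancel_cons_neg; auto.
Qed.

Lemma hequiv_inv_word u v : word_on G O u -> word_on G O v -> hequiv G O u v ->
  hequiv G O (inv_word G u) (inv_word G v).
Proof.
  intros Hu Hv E.
  transitivity (inv_word G u ++ v ++ inv_word G v ++ []).
  - rewrite hequiv_cat_inv_word, app_nil_r by exact Hv. reflexivity.
  - rewrite <- E at 1. rewrite hequiv_inv_word_cat, app_nil_r by exact Hu. reflexivity.
Qed.

(* For an inverse letter the defining relation is applied to a^{h^{-1}}, which lies in O. *)
Lemma hequiv_conj_letter (h a : G) b r : O h -> O a ->
  hequiv G O ((h, negb b) :: (a, false) :: (h, b) :: r)
             ((gconj a (eval_letter G (h, b)), false) :: r).
Proof.
  intros Oh Oa.
  change (hequiv G O ([(h, negb b); (a, false); (h, b)] ++ r)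
                     ([(gconj a (eval_letter G (h, b)), false)] ++ r)).
  apply hequiv_cat; [|reflexivity].
  destruct b; simpl; [|apply hequiv_rel; auto].
  set (c := gconj a (ginv G h)).
  assert (Oc : O c) by (apply O_gconj, Oa).
  transitivity ((h, false) :: ([(h, true); (c, false); (h, false)] ++ [(h, true)])).
  - rewrite (hequiv_rel G O c h Oc Oh). unfold c. rewrite gconjVK. reflexivity.
  - simpl. rewrite !(hequiv_cancel_cons_neg h true) by exact Oh. reflexivity.
Qed.

Definition conj_word (x : G) (u : word G) : word G :=
  map (fun l => (gconj (fst l) x, snd l)) u.

Lemma hequiv_conj_gen w a : word_on G O w -> O a ->
  hequiv G O (inv_word G w ++ (a, false) :: w) [(gconj a (eval G w), false)].
Proof.
  intro Hw. revert a. induction Hw as [|[h b] w Oh Hw IH]; intros a Oa.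
  - simpl. rewrite gconj1. reflexivity.
  - rewrite inv_word_cons, <- app_assoc. simpl.
    rewrite hequiv_conj_letter, IH by auto.
    rewrite gconjM. reflexivity.
Qed.

Lemma hequiv_conj_letter_word w a b : word_on G O w -> O a ->
  hequiv G O (inv_word G w ++ (a, b) :: w) [(gconj a (eval G w), b)].
Proof.
  intros Hw Oa. destruct b; [|apply hequiv_conj_gen; auto].
  assert (E : inv_word G (inv_word G w ++ (a, false) :: w) = inv_word G w ++ (a, true) :: w).
  { rewrite inv_word_cat, inv_word_cons, inv_wordK, <- app_assoc. reflexivity. }
  rewrite <- E.
  change [(gconj a (eval G w), true)] with (inv_word G [(gconj a (eval G w), false)]).
  apply hequiv_inv_word.
  - apply word_on_cat; [apply word_on_inv, Hw | constructor; auto].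
  - repeat constructor. apply O_gconj, Oa.
  - apply hequiv_conj_gen; auto.
Qed.

Lemma hequiv_conj_word u v : word_on G O u -> word_on G O v ->
  hequiv G O (inv_word G v ++ u ++ v) (conj_word (eval G v) u).
Proof.
  intros Hu Hv. induction Hu as [|[a b] u Oa Hu IH].
  - simpl. rewrite <- (app_nil_r v) at 2. apply hequiv_inv_word_cat, Hv.
  - cbn [app]. rewrite <- (hequiv_cat_inv_word v (u ++ v)) by exact Hv.
    rewrite app_comm_cons, app_assoc.
    rewrite hequiv_conj_letter_word, IH by auto. reflexivity.
Qed.

Lemma word_on_comm u v : word_on G O u -> word_on G O v -> word_on G O (comm_word G u v).
Proof.
  intros Hu Hv. unfold comm_word.
  repeat apply word_on_cat; auto; apply word_on_inv; auto.
Qed.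

Lemma comm_wordC u v : comm_word G u v = inv_word G (comm_word G v u).
Proof. unfold comm_word. rewrite !inv_word_cat, !inv_wordK, <- !app_assoc. reflexivity. Qed.

Lemma hequiv_comm_word_r u v v' : word_on G O u -> word_on G O v -> word_on G O v' ->
  eval G v = eval G v' -> hequiv G O (comm_word G u v) (comm_word G u v').
Proof.
  intros Hu Hv Hv' E. unfold comm_word.
  rewrite (hequiv_conj_word u v), (hequiv_conj_word u v'), E by auto. reflexivity.
Qed.

Lemma hequiv_comm_word u v u' v' :
  word_on G O u -> word_on G O v -> word_on G O u' -> word_on G O v' ->
  eval G u = eval G u' -> eval G v = eval G v' ->
  hequiv G O (comm_word G u v) (comm_word G u' v').
Proof.
  intros Hu Hv Hu' Hv' Eu Ev.
  rewrite (hequiv_comm_word_r u v v'), (comm_wordC u v'), (comm_wordC u' v') by auto.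
  apply hequiv_inv_word; try apply word_on_comm; auto.
  apply hequiv_comm_word_r; auto.
Qed.

End ConjugationInvariantGenerators.

Definition comm_prod (G : Group) (ps : list (word G * word G)) : word G :=
  concat (map (fun p => comm_word G (fst p) (snd p)) ps).

Definition pairs_on (G : Group) (O : G -> Prop) (ps : list (word G * word G)) : Prop :=
  Forall (fun p => word_on G O (fst p) /\ word_on G O (snd p)) ps.

Section SubEquipment.
Variable G : Group.
Variables O O' : G -> Prop.
Hypothesis O_gconj : forall g h, O g -> O (gconj g h).
Hypothesis sub_O'O : forall x, O' x -> O x.
Hypothesis O'_gen : generates O'.

Lemma word_on_comm_prod ps : pairs_on G O' ps -> word_on G O' (comm_prod G ps).
Proof.
  intro Hps. apply Forall_concat, Forall_map.
  eapply Forall_impl; [|exact Hps]. intros p [Hu Hv]. apply word_on_comm; assumption.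
Qed.

Lemma hequiv_comm_prod_sub ps : pairs_on G O ps ->
  exists ps', pairs_on G O' ps' /\ hequiv G O (comm_prod G ps) (comm_prod G ps').
Proof.
  intro Hps. induction Hps as [|[u v] ps [Hu Hv] Hps IH].
  - exists []. split; [constructor | reflexivity].
  - destruct IH as [ps' [Hps' E]].
    destruct (O'_gen (eval G u)) as [u' [Hu' Eu]].
    destruct (O'_gen (eval G v)) as [v' [Hv' Ev]].
    exists ((u', v') :: ps'). split; [constructor; auto|].
    unfold comm_prod in *. simpl. rewrite E.
    apply hequiv_cat; [|reflexivity].
    apply hequiv_comm_word; eauto using word_on_sub.
Qed.

Lemma amb_set_sub_representative w :
  amb_set G O w -> exists w', amb_set G O' w' /\ hequiv G O w w'.
Proof.
  intros [Hw [Ew [ps [Hps E]]]]. fold (comm_prod G ps) in E.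
  destruct (hequiv_comm_prod_sub ps Hps) as [ps' [Hps' E']].
  exists (comm_prod G ps'). repeat split.
  - apply word_on_comm_prod, Hps'.
  - rewrite <- (hequiv_eval G O _ _ E'), <- (hequiv_eval G O _ _ E). exact Ew.
  - exists ps'. split; [exact Hps' | reflexivity].
  - rewrite E. exact E'.
Qed.

End SubEquipment.

Lemma epsilon_class_compat (A : Type) (a0 : A) (R : A -> A -> Prop) `{Equivalence A R}
    (P : A -> Prop) x y :
  R x y -> epsilon (inhabits a0) (fun z => P z /\ R x z) = epsilon (inhabits a0) (fun z => P z /\ R y z).
Proof.
  intro Exy. f_equal. apply functional_extensionality. intro z.
  apply propositional_extensionality. rewrite Exy. reflexivity.
Qed.

Section Representatives.
Variable G : Group.
Variables O O' : G -> Prop.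
Hypothesis sub_O'O : forall x, O' x -> O x.
Hypothesis amb_rep : forall w, amb_set G O w -> exists w', amb_set G O' w' /\ hequiv G O w w'.

Lemma amb_le_of_representatives : amb_le O O'.
Proof.
  set (rep w := epsilon (inhabits []) (fun w' => amb_set G O' w' /\ hequiv G O w w')).
  assert (rep_spec : forall w, amb_set G O w -> amb_set G O' (rep w) /\ hequiv G O w (rep w)).
  { intros w Hw. apply epsilon_spec, amb_rep, Hw. }
  exists rep. split; [|split].
  - intros w Hw. apply rep_spec, Hw.
  - intros w1 w2 _ _ E. unfold rep. rewrite (epsilon_class_compat _ _ _ _ w1 w2 E). reflexivity.
  - intros w1 w2 H1 H2 E.
    rewrite (proj2 (rep_spec w1 H1)), (proj2 (rep_spec w2 H2)).
    apply (hequiv_sub G O O'); assumption.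
Qed.

Lemma amb_one_of_representatives : amb_one O' -> amb_one O.
Proof.
  intros one' w Hw. destruct (amb_rep w Hw) as [w' [Hw' E]].
  rewrite E. apply (hequiv_sub G O O' _ _ sub_O'O), one', Hw'.
Qed.

End Representatives.

Theorem corollary2p20 (G : Group) (O O' : G -> Prop) :
  equipment O -> equipment O' ->
  (forall x, O' x -> O x) ->
  finite_set O ->
  generates O' ->
  amb_le O O' /\ (amb_one O' -> amb_one O).
Proof.
  intros [O_gconj _] _ sub_O'O _ O'_gen.
  pose proof (amb_set_sub_representative G O O' O_gconj sub_O'O O'_gen) as amb_rep.
  split.
  - apply amb_le_of_representatives; assumption.
  - apply amb_one_of_representatives; assumption.
Qed.
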